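(* Let $K$ be a field of characteristic $p$, $q$ a power of $p$, $\mathbb{F}_q\subset K$. Extend the Carlitz module to $\phi:\mathbb{F}_q((T))\to K(\!(\tau)\!)$, $\phi(\sum_{i\ge -N}a_iT^i)=\sum_{i\ge-N}a_i\tau^i$, using on $K$ the $A$-field structure $\iota_0$ with $\iota_0(T)=0$. Give $\mathbb{F}_q((T))$ the language $\mathcal{L}_T=\{0,1,T,+,\cdot\}$ and $K(\!(\tau)\!)$ the language $\mathcal{L}_{\tau,\iota_0}=\{0,1,\iota_0(T),\tau,+,\cdot\}$. Then $\phi$ is an effective Diophantine map. If Hilbert's tenth problem over $(\mathbb{F}_q((T)),\mathcal{L}_T)$ has a negative answer, then so has Hilbert's tenth problem over $(K(\!(\tau)\!),\mathcal{L}_{\tau,\iota_0})$.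
   Context: $K(\!(\tau)\!)$ is the twisted Laurent series ring: series $\sum_{i\ge-N}a_i\tau^i$, $a_i\in K$, with usual addition and multiplication determined by $\tau a=a^q\tau$. For a set $R$ with language $\mathcal{L}$ (constants, functions, relations incl. $0$ and $=$), $S\subset R^k$ is Diophantine if $S=\{\vec x\mid\exists\vec y\ (f_1\wedge\dots\wedge f_r)\}$ with basic formulas $f_i$ of the form $(t_1,\dots,t_m)\in S'$, $S'$ a relation or equality and $t_j$ terms of $\mathcal{L}$. A map $d:R_1\to R_2$ is Diophantine if coordinatewise images of Diophantine sets are Diophantine; effective if a Diophantine definition of $d(S)$ is algorithmically computable from one of $S$. With $S_c'(\mathcal{L})=\{x\mid\{x\}\text{ Diophantine}\}$, Hilbert's tenth problem exists over $(R,\mathcal{L})$ if some recursive ring $R_0$ satisfies (constants) $\subset R_0\subset S_c'(\mathcal{L})$; it has a negative answer if no algorithm decides solvability in $R$ of finite conjunctions of basic formulas with extra coefficients in $R_0$.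
   Formalization: K is also assumed perfect: every element of K has a q-th root, where q is the given power of p. The statement above fails without it. *)

From HB Require Import structures.
From mathcomp Require Import all_boot all_order all_algebra all_field.
From Stdlib Require Import ClassicalEpsilon.
From Stdlib Require List.
Set Implicit Arguments. Unset Strict Implicit. Unset Printing Implicit Defensive.
Import Order.TTheory GRing.Theory Num.Theory.

Inductive prf : Type :=
| PZero | PSucc | PProj of nat | PComp of prf & seq prf
| PRec of prf & prf | PMu of prf.

Inductive peval : prf -> seq nat -> nat -> Prop :=
| pe_zero v : peval PZero v 0
| pe_succ v : peval PSucc v (nth 0%N v 0).+1
| pe_proj i v : peval (PProj i) v (nth 0%N v i)
| pe_comp f gs v ws y : pevals gs v ws -> peval f ws y -> peval (PComp f gs) v y
| pe_rec0 f g v y : peval f v y -> peval (PRec f g) (0%N :: v) y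
| pe_recS f g m v r y : peval (PRec f g) (m :: v) r ->
    peval g (m :: r :: v) y -> peval (PRec f g) (m.+1 :: v) y
| pe_mu f v m : peval f (m :: v) 0%N ->
    (forall j, (j < m)%N -> exists k, peval f (j :: v) k.+1) -> peval (PMu f) v m
with pevals : seq prf -> seq nat -> seq nat -> Prop :=
| pes_nil v : pevals [::] v [::]
| pes_cons g gs v w ws : peval g v w -> pevals gs v ws -> pevals (g :: gs) v (w :: ws).

Definition computable1 (f : nat -> nat) : Prop :=
  exists P, forall n, peval P [:: n] (f n).
Definition computable2 (f : nat -> nat -> nat) : Prop :=
  exists P, forall a b, peval P [:: a; b] (f a b).

(*    lone/lopp are the ring's 1 and negation (used only to say that   *)
(*    R_0 is a subring); the language constants are [lconsts].         *)
Record lstruct := LStruct {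
  car : Type;
  lzero : car; lone : car;
  ladd : car -> car -> car; lmul : car -> car -> car;
  lopp : car -> car;
  lconsts : seq car }.

(* terms: variables, language constants (indexed), parameters
   (codes of extra coefficients), +, . *)
Inductive term : Type :=
| Var of nat | Cst of nat | Par of nat | Add of term & term | Mul of term & term.

Fixpoint t2g (t : term) : GenTree.tree nat :=
  match t with
  | Var n => GenTree.Node 0 [:: GenTree.Leaf n]
  | Cst n => GenTree.Node 1 [:: GenTree.Leaf n]
  | Par n => GenTree.Node 2 [:: GenTree.Leaf n]
  | Add a b => GenTree.Node 3 [:: t2g a; t2g b]
  | Mul a b => GenTree.Node 4 [:: t2g a; t2g b]
  end.

Fixpoint g2t (g : GenTree.tree nat) : option term :=
  match g with
  | GenTree.Node 0 [:: GenTree.Leaf n] => Some (Var n)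
  | GenTree.Node 1 [:: GenTree.Leaf n] => Some (Cst n)
  | GenTree.Node 2 [:: GenTree.Leaf n] => Some (Par n)
  | GenTree.Node 3 [:: a; b] =>
      match g2t a, g2t b with Some x, Some y => Some (Add x y) | _, _ => None end
  | GenTree.Node 4 [:: a; b] =>
      match g2t a, g2t b with Some x, Some y => Some (Mul x y) | _, _ => None end
  | _ => None
  end.

Lemma t2gK : pcancel t2g g2t.
Proof. by elim=> //= a -> b ->. Qed.

HB.instance Definition _ := Countable.copy term (pcan_type t2gK).

Fixpoint teval (M : lstruct) (par env : nat -> car M) (t : term) : car M :=
  match t with
  | Var n => env n
  | Cst i => nth (lzero M) (lconsts M) i
  | Par c => par c
  | Add a b => @ladd M (teval par env a) (teval par env b)
  | Mul a b => @lmul M (teval par env a) (teval par env b)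
  end.

Fixpoint tparfree (t : term) : bool :=
  match t with
  | Par _ => false
  | Add a b | Mul a b => tparfree a && tparfree b
  | _ => true
  end.

Fixpoint tpars (t : term) : seq nat :=
  match t with
  | Par c => [:: c]
  | Add a b | Mul a b => tpars a ++ tpars b
  | _ => [::]
  end.

Definition system := seq (term * term).

Definition sat (M : lstruct) (par env : nat -> car M) (E : system) : Prop :=
  List.Forall (fun e => teval par env e.1 = teval par env e.2) E.

Definition parfree (E : system) : Prop :=
  List.Forall (fun e => tparfree e.1 && tparfree e.2) E.

(* variables 0..k-1 are the free ones, the others existentially quantified *)
Definition envk (M : lstruct) (k : nat) (x : k.-tuple (car M)) (y : nat -> car M)
  : nat -> car M :=
  fun n => if (n < k)%N then nth (lzero M) x n else y (n - k)%N.

Definition defines (M : lstruct) (k : nat) (E : system)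
    (S : k.-tuple (car M) -> Prop) : Prop :=
  parfree E /\
  forall x, S x <-> exists y : nat -> car M, sat (fun _ => lzero M) (envk x y) E.

Definition diophantine (M : lstruct) (k : nat) (S : k.-tuple (car M) -> Prop) : Prop :=
  exists E, defines E S.

Definition timage (M N : lstruct) (d : car M -> car N) (k : nat)
    (S : k.-tuple (car M) -> Prop) : k.-tuple (car N) -> Prop :=
  fun z => exists x, S x /\ z = map_tuple d x.

Definition dioph_map (M N : lstruct) (d : car M -> car N) : Prop :=
  forall k (S : k.-tuple (car M) -> Prop), diophantine S -> diophantine (timage d S).

(* effective: a Diophantine definition of d(S) is computable from one of S
   (codes via the canonical countType encoding [pickle]) *)
Definition effective_dioph_map (M N : lstruct) (d : car M -> car N) : Prop :=
  dioph_map d /\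
  exists G : nat -> nat, computable1 G /\
    forall k (E : system) (S : k.-tuple (car M) -> Prop), defines E S ->
      exists E', unpickle (G (pickle (k, E))) = Some E' /\ defines E' (timage d S).

(* A recursive subring R_0 is given by a decidable set of codes rdom,  *)
(* a valuation rval, and computable ring operations / equality on codes*)
Record recpres (M : lstruct) := RecPres {
  rdom : nat -> bool;
  rval : nat -> car M;
  rzero : nat; rone : nat;
  radd : nat -> nat -> nat; rmul : nat -> nat -> nat; ropp : nat -> nat;
  req : nat -> nat -> nat }.

Definition recursive_subring (M : lstruct) (R : recpres M) : Prop :=
  (computable1 (fun n => nat_of_bool (rdom R n)) /\
   computable2 (radd R) /\ computable2 (rmul R) /\
   computable1 (ropp R) /\ computable2 (req R)) /\
  (rdom R (rzero R) /\ rval R (rzero R) = lzero M) /\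
  (rdom R (rone R) /\ rval R (rone R) = lone M) /\
  (forall a b, rdom R a -> rdom R b ->
     rdom R (radd R a b) /\ rval R (radd R a b) = @ladd M (rval R a) (rval R b)) /\
  (forall a b, rdom R a -> rdom R b ->
     rdom R (rmul R a b) /\ rval R (rmul R a b) = @lmul M (rval R a) (rval R b)) /\
  (forall a, rdom R a -> rdom R (ropp R a) /\ rval R (ropp R a) = @lopp M (rval R a)) /\
  (forall a b, rdom R a -> rdom R b -> (req R a b = 1%N <-> rval R a = rval R b)).

Definition dioph_singleton (M : lstruct) (x : car M) : Prop :=
  diophantine (fun t : 1.-tuple (car M) => t = [tuple x]).

(* R_0 witnesses that Hilbert's tenth problem exists over (M, L) *)
Definition HTP_witness (M : lstruct) (R : recpres M) : Prop :=
  [/\ recursive_subring R,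
      (forall i, (i < size (lconsts M))%N ->
         exists a, rdom R a /\ rval R a = nth (lzero M) (lconsts M) i) &
      (forall a, rdom R a -> dioph_singleton (rval R a))].

Definition solvable (M : lstruct) (R : recpres M) (E : system) : Prop :=
  exists env : nat -> car M, sat (rval R) env E.

Definition params_in (M : lstruct) (R : recpres M) (E : system) : Prop :=
  List.Forall (fun e => all (rdom R) (tpars e.1 ++ tpars e.2)) E.

Definition HTP_negative (M : lstruct) : Prop :=
  exists R : recpres M, HTP_witness R /\
    forall F : nat -> nat, computable1 F ->
      exists E : system, params_in R E /\ ~ (solvable R E <-> F (pickle E) = 1%N).

(* 4. Twisted Laurent series R((tau)) with tau a = sigma(a) tau,       *)
(*    sigma invertible with inverse sigmai.                            *)
Local Open Scope ring_scope.
Section TLS.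
Variable R : nzRingType.

Record tls := TLS {
  tcoef : int -> R;
  tbdd : exists N : int, forall i : int, i < N -> tcoef i = 0 }.

Definition tlb (f : tls) : int := proj1_sig (constructive_indefinite_description _ (tbdd f)).

Lemma tmk_bdd (c : int -> R) (N : int) :
  exists N' : int, forall i : int, i < N' -> (if i < N then 0 else c i) = 0.
Proof. by exists N => i ->. Qed.

Definition tmk (c : int -> R) (N : int) : tls := TLS (tmk_bdd c N).

Definition tzero : tls := tmk (fun _ => 0) 0.
Definition tone : tls := tmk (fun i => if i == 0 then 1 else 0) 0.
Definition tconst (a : R) : tls := tmk (fun i => if i == 0 then a else 0) 0.
Definition tvar : tls := tmk (fun i => if i == 1 then 1 else 0) 0.
Definition tadd (f g : tls) : tls :=
  tmk (fun i => tcoef f i + tcoef g i) (Num.min (tlb f) (tlb g)).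
Definition topp (f : tls) : tls := tmk (fun i => - tcoef f i) (tlb f).

Definition spow (sigma sigmai : R -> R) (i : int) : R -> R :=
  match i with Posz m => iter m sigma | Negz m => iter m.+1 sigmai end.

(* (sum a_i tau^i)(sum b_j tau^j) = sum_n (sum_{i+j=n} a_i sigma^i(b_j)) tau^n *)
Definition tmul (sigma sigmai : R -> R) (f g : tls) : tls :=
  tmk (fun n => \sum_(k < (absz (n - tlb f - tlb g)%R).+1)
          tcoef f (tlb f + k%:Z) *
          spow sigma sigmai (tlb f + k%:Z) (tcoef g (n - tlb f - k%:Z)))
      (tlb f + tlb g).
End TLS.

Definition LT (F : finFieldType) : lstruct :=
  LStruct (@tzero F) (@tone F) (@tadd F) (@tmul F id id) (@topp F)
    [:: @tzero F; @tone F; @tvar F].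

Definition frob (K : fieldType) (q : nat) (x : K) : K := x ^+ q.
Definition qroot (K : fieldType) (q : nat) (x : K) : K :=
  epsilon (inhabits x) (fun y => y ^+ q = x).

(* K((tau)), tau a = a^q tau, language {0,1,iota_0(T),tau,+,.}, iota_0(T) = 0 *)
Definition Ltau (K : fieldType) (q : nat) : lstruct :=
  LStruct (@tzero K) (@tone K) (@tadd K) (@tmul K (frob q) (qroot q)) (@topp K)
    [:: @tzero K; @tone K; tconst (0 : K) (* iota_0(T) *); @tvar K].

Definition phi (F : finFieldType) (K : fieldType) (iota : F -> K) (f : tls F) : tls K :=
  tmk (fun i => iota (tcoef f i)) (tlb f).

From HB Require Import structures.
From mathcomp Require Import all_boot all_order all_algebra all_field.
From mathcomp Require Import zify.
From Stdlib Require Import ProofIrrelevance FunctionalExtensionality ClassicalEpsilon.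
Import Order.TTheory GRing.Theory Num.Theory.
Set Implicit Arguments. Unset Strict Implicit. Unset Printing Implicit Defensive.

(* Every coefficient of [phi f] lies in [iota F_q] and is thus fixed by
   [x |-> x ^+ q], so [tau] commutes with it and [phi] is an injective ring
   morphism.  Conversely, a series commuting with [tau] has coefficients that
   are roots of ['X^q - 'X]; the [q] elements of [iota F_q] are already all of
   them, so the image of [phi] is exactly the centraliser of [tau].  Hence a
   system [E] over [F_q((T))] has a solution (resp. defines [S]) iff the
   system obtained by renaming [T] to [tau] and adding [x_i tau = tau x_i] for
   every variable [x_i] has a solution (resp. defines [phi S]) in [K((tau))].
   The translation is primitive recursive on codes, which gives effectiveness
   and reduces Hilbert's tenth problem over [F_q((T))] to that over
   [K((tau))]. *)

Section Computable.
Local Open Scope nat_scope.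
Local Notation arg0 v := (nth 0 v 0).
Local Notation arg1 v := (nth 0 v 1).
Local Notation arg2 v := (nth 0 v 2).

Definition computable (f : seq nat -> nat) := exists P, forall v, peval P v (f v).

Lemma computable1P g : computable (fun v => g (arg0 v)) -> computable1 g.
Proof. by case=> P HP; exists P => m; exact: HP [:: m]. Qed.

Lemma computable1_computable g : computable1 g -> computable (fun v => g (arg0 v)).
Proof.
case=> P HP; exists (PComp P [:: PProj 0]) => v.
by econstructor; [constructor; [constructor | constructor] | exact: HP].
Qed.

Lemma computable_ext f g : computable f -> f =1 g -> computable g.
Proof. by case=> P HP fg; exists P => v; rewrite -fg. Qed.

Lemma computable_proj i : computable (fun v => nth 0 v i).
Proof. by exists (PProj i) => v; constructor. Qed.

Lemma computable_comp f (gs : seq (seq nat -> nat)) :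
  computable f -> List.Forall computable gs ->
  computable (fun v => f (map (fun g => g v) gs)).
Proof.
case=> P HP Hgs.
have [Ps HPs] : exists Ps, forall v, pevals Ps v (map (fun g => g v) gs).
  elim: Hgs => [|g gs' [Q HQ] _ [Ps HPs]]; first by exists [::] => v; constructor.
  by exists (Q :: Ps) => v; constructor.
by exists (PComp P Ps) => v; econstructor.
Qed.

Lemma computable_comp1 g h :
  computable (fun v => g (arg0 v)) -> computable h -> computable (fun v => g (h v)).
Proof. by move=> Hg Hh; apply: computable_comp Hg (List.Forall_cons _ Hh _). Qed.

Lemma computable_comp2 g h1 h2 :
  computable (fun v => g (arg0 v) (arg1 v)) -> computable h1 -> computable h2 ->
  computable (fun v => g (h1 v) (h2 v)).
Proof.
by move=> Hg H1 H2; apply: computable_comp Hg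
  (List.Forall_cons _ H1 (List.Forall_cons _ H2 (List.Forall_nil _))).
Qed.

Lemma computable_succ x : computable x -> computable (fun v => (x v).+1).
Proof. by apply: computable_comp1; exists PSucc => v; constructor. Qed.

Lemma computable_const c : computable (fun _ => c).
Proof.
elim: c => [|c IH]; first by exists PZero => v; constructor.
exact: computable_succ.
Qed.

Fixpoint prec (h : nat -> nat) (g : nat -> nat -> nat -> nat) n x :=
  if n is m.+1 then g m (prec h g m x) x else h x.

Lemma computable_prec h g n x :
  computable (fun v => h (arg0 v)) -> computable (fun v => g (arg0 v) (arg1 v) (arg2 v)) ->
  computable n -> computable x -> computable (fun v => prec h g (n v) (x v)).
Proof.
move=> [H HH] [G HG]; apply: computable_comp2.
exists (PComp (PRec H G) [:: PProj 0; PProj 1]) => v.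
econstructor; first by do 2 econstructor; constructor.
elim: (arg0 v) => [|m IH] /=; first by constructor; apply: HH.
by econstructor; [exact: IH | exact: HG].
Qed.

Lemma computable_mu (f : nat -> seq nat -> nat) (g : seq nat -> nat) :
  computable (fun v => f (arg0 v) (behead v)) ->
  (forall v, f (g v) v = 0 /\ forall j, j < g v -> f j v <> 0) -> computable g.
Proof.
case=> P HP Hg; exists (PMu P) => v; have [H0 H1] := Hg v.
constructor; first by have := HP (g v :: v); rewrite /= H0.
move=> j /H1 Hj; exists (f j v).-1; rewrite prednK; first exact: (HP (j :: v)).
by rewrite lt0n; apply/eqP.
Qed.

Lemma computable_iter g n x : computable (fun v => g (arg0 v)) ->
  computable n -> computable x -> computable (fun v => iter (n v) g (x v)).
Proof.
move=> Hg Hn Hx.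
apply: computable_ext (computable_prec (h := id) (g := fun _ r _ => g r) _ _ Hn Hx) _.
- exact: computable_proj.
- exact: computable_comp1 Hg (computable_proj 1).
by move=> v /=; elim: (n v) => //= m ->.
Qed.

Lemma computable_add x y : computable x -> computable y -> computable (fun v => x v + y v).
Proof.
move=> Hx Hy; apply: computable_ext (computable_iter (g := succn) _ Hx Hy) _.
  exact: computable_succ (computable_proj 0).
by move=> v /=; elim: (x v) => //= m ->.
Qed.

Lemma computable_pred x : computable x -> computable (fun v => (x v).-1).
Proof.
move=> Hx; apply: computable_ext
  (computable_prec (h := fun _ => 0) (g := fun m _ _ => m) _ _ Hx Hx) _.
- exact: computable_const.
- exact: computable_proj.
by move=> v; case: (x v).
Qed.

Lemma computable_sub x y : computable x -> computable y -> computable (fun v => x v - y v).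
Proof.
move=> Hx Hy; apply: computable_ext (computable_iter (g := predn) _ Hy Hx) _.
  exact: computable_pred (computable_proj 0).
by move=> v /=; elim: (y v) => [|m IH] /=; rewrite ?subn0 // IH subnS.
Qed.

Lemma computable_mul x y : computable x -> computable y -> computable (fun v => x v * y v).
Proof.
move=> Hx Hy; apply: computable_ext (computable_prec (h := fun _ => 0)
  (g := fun _ r y => r + y) _ _ Hx Hy) _.
- exact: computable_const.
- exact: computable_add (computable_proj 1) (computable_proj 2).
by move=> v /=; elim: (x v) => //= m ->; rewrite mulSn addnC.
Qed.

Lemma computable_exp x y : computable x -> computable y -> computable (fun v => x v ^ y v).
Proof.
move=> Hx Hy; apply: computable_ext (computable_prec (h := fun _ => 1)
  (g := fun _ r x => r * x) _ _ Hy Hx) _.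
- exact: computable_const.
- exact: computable_mul (computable_proj 1) (computable_proj 2).
by move=> v /=; elim: (y v) => //= m ->; rewrite expnS mulnC.
Qed.

Lemma computable_eqn x y :
  computable x -> computable y -> computable (fun v => nat_of_bool (x v == y v)).
Proof.
move=> Hx Hy; pose d v := (x v - y v) + (y v - x v).
have Hd : computable d by apply: computable_add; apply: computable_sub.
apply: computable_ext (computable_sub (computable_const 1) Hd) _ => v.
by rewrite /d eqn_leq -!subn_eq0 -addn_eq0; case: (_ + _).
Qed.

Lemma computable_ltn x y :
  computable x -> computable y -> computable (fun v => nat_of_bool (x v < y v)).
Proof.
move=> Hx Hy; apply: computable_ext (computable_sub (computable_const 1)
  (computable_eqn (computable_sub Hy Hx) (computable_const 0))) _.
by move=> v; rewrite subn_eq0 leqNgt; case: (_ < _).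
Qed.

Lemma computable_if (b : seq nat -> bool) x y :
  computable (fun v => nat_of_bool (b v)) -> computable x -> computable y ->
  computable (fun v => if b v then x v else y v).
Proof.
move=> Hb Hx Hy; apply: computable_ext (computable_add (computable_mul Hb Hx)
  (computable_mul (computable_sub (computable_const 1) Hb) Hy)) _.
by move=> v; case: (b v); rewrite /= ?mul1n ?mul0n ?addn0.
Qed.

Lemma computable_div x y : computable x -> computable y -> computable (fun v => x v %/ y v).
Proof.
move=> Hx Hy; apply: computable_comp2 _ Hx Hy.
pose f j w := if nth 0 w 1 == 0 then 0 else nat_of_bool (nth 0 w 1 * j.+1 <= nth 0 w 0).
apply: (@computable_mu f).
  have Hm : computable (fun v => arg2 v * (arg0 v).+1).
    exact: computable_mul (computable_proj 2) (computable_succ (computable_proj 0)).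
  apply: computable_ext (computable_if _ (computable_const 0)
    (computable_ltn Hm (computable_succ (computable_proj 1)))) _.
    exact: computable_eqn (computable_proj 2) (computable_const 0).
  by move=> v; rewrite /f !nth_behead ltnS.
move=> v; rewrite /f; case: eqP => [->|/eqP d0]; first by rewrite divn0.
split; first by rewrite leqNgt mulnC ltn_ceil ?lt0n.
move=> j Hj; rewrite mulnC (leq_trans _ (leq_divM (nth 0 v 0) (nth 0 v 1))) //.
by rewrite leq_mul2r Hj orbT.
Qed.

Lemma computable_odd x : computable x -> computable (fun v => nat_of_bool (odd (x v))).
Proof.
move=> Hx; apply: computable_ext (computable_sub Hx
  (computable_mul (computable_div Hx (computable_const 2)) (computable_const 2))) _.
by move=> v; rewrite {1}(divn_eq (x v) 2) addKn modn2.
Qed.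

Definition code_cons a b := 2 ^ a * b.*2.+1.
Definition code_head c := find (fun i => odd (c %/ 2 ^ i)) (iota 0 c).
Definition code_tail c := c %/ 2 ^ code_head c %/ 2.
Arguments code_cons : simpl never.
Arguments code_head : simpl never.
Arguments code_tail : simpl never.

Lemma code_consE x s : CodeSeq.code (x :: s) = code_cons x (CodeSeq.code s).
Proof. by []. Qed.

Lemma code_cons_gt0 a b : 0 < code_cons a b.
Proof. by rewrite muln_gt0 expn_gt0. Qed.

Lemma ltn_code_consl a b : a < code_cons a b.
Proof. by rewrite (leq_trans (ltn_expl a (ltnSn 1))) // leq_pmulr. Qed.

Lemma ltn_code_consr a b : b < code_cons a b.
Proof.
rewrite (leq_trans _ (leq_pmull _ _)) ?expn_gt0 //.
by rewrite ltnS -addnn leq_addr.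
Qed.

Lemma code_cons_div a b j : j <= a -> code_cons a b %/ 2 ^ j = 2 ^ (a - j) * b.*2.+1.
Proof. by move=> ja; rewrite /code_cons -{1}(subnK ja) expnD mulnAC mulnK ?expn_gt0. Qed.

Lemma find_iota0 (P : pred nat) n a : a < n -> P a -> (forall j, j < a -> ~~ P j) ->
  find P (iota 0 n) = a.
Proof.
move=> an Pa lo; rewrite -(subnKC (ltnW an)) iotaD find_cat.
have -> : has P (iota 0 a) = false.
  by apply/hasPn => j; rewrite mem_iota add0n => /andP[_ /lo].
by rewrite size_iota add0n -(subnSK an) /= Pa addn0.
Qed.

Lemma code_headK a b : code_head (code_cons a b) = a.
Proof.
apply: find_iota0; first exact: ltn_code_consl.
  by rewrite code_cons_div // subnn mul1n /= odd_double.
by move=> j ja; rewrite code_cons_div ?(ltnW ja) // oddM oddX subn_eq0 leqNgt ja.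
Qed.

Lemma code_tailK a b : code_tail (code_cons a b) = b.
Proof.
rewrite /code_tail code_headK code_cons_div // subnn mul1n -addn1 -muln2.
by rewrite divnMDl // divn_small ?addn0.
Qed.

Lemma code_cons_surj c : 0 < c -> exists a b, c = code_cons a b.
Proof.
elim/ltn_ind: c => c IH c0; case Oc: (odd c).
  exists 0, c./2; rewrite /code_cons mul1n -[in LHS](odd_double_half c) Oc.
  by rewrite add1n.
have Hc : c = (c./2).*2 by rewrite -[in LHS](odd_double_half c) Oc.
have h0 : 0 < c./2 by move: c0; rewrite {1}Hc double_gt0.
have lt : c./2 < c by rewrite {2}Hc -addnn -{1}[c./2]add0n ltn_add2r.
have [a [b E]] := IH _ lt h0.
by exists a.+1, b; rewrite Hc E /code_cons expnS -mulnA mul2n.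
Qed.

Lemma computable_code_cons x y :
  computable x -> computable y -> computable (fun v => code_cons (x v) (y v)).
Proof.
move=> Hx Hy; apply: computable_mul; first exact: computable_exp (computable_const 2) Hx.
apply: computable_ext (computable_succ (computable_mul Hy (computable_const 2))) _.
by move=> v; rewrite muln2.
Qed.

Lemma computable_code_head x : computable x -> computable (fun v => code_head (x v)).
Proof.
move=> Hx; apply: (computable_comp1 (g := code_head)) Hx.
pose f i w := if nth 0 w 0 == 0 then 0 else nat_of_bool (~~ odd (nth 0 w 0 %/ 2 ^ i)).
apply: (@computable_mu f).
  have Hodd : computable (fun v => nat_of_bool (odd (arg1 v %/ 2 ^ arg0 v))).
    apply/computable_odd/computable_div; first exact: computable_proj.
    exact: computable_exp (computable_const 2) (computable_proj 0).
  apply: computable_ext (computable_if _ (computable_const 0)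
    (computable_sub (computable_const 1) Hodd)) _.
    exact: computable_eqn (computable_proj 1) (computable_const 0).
  by move=> v; rewrite /f !nth_behead; case: odd.
move=> v; rewrite /f; case: eqP => [->|/eqP c0]; first by [].
have [a [b ->]] : exists a b, nth 0 v 0 = code_cons a b by apply: code_cons_surj; rewrite lt0n.
rewrite code_headK code_cons_div // subnn mul1n /= odd_double; split=> // j ja.
by rewrite code_cons_div ?(ltnW ja) // oddM oddX subn_eq0 leqNgt ja.
Qed.

Lemma computable_code_tail x : computable x -> computable (fun v => code_tail (x v)).
Proof.
move=> Hx; apply: computable_div (computable_const 2).
exact: computable_div Hx (computable_exp (computable_const 2) (computable_code_head Hx)).
Qed.

Section PairmapCode.
Variable f : nat -> nat -> nat.

(* A state [code_cons r (code_cons x a)] holds the code [r] of the input still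
   to be read, the last item [x] read, and the code [a] of the reversed output. *)
Definition pairmap_step s :=
  let r := code_head s in let x := code_head (code_tail s) in
  if r == 0 then s else
  code_cons (code_tail r) (code_cons (code_head r) (code_cons (f x (code_head r))
    (code_tail (code_tail s)))).

Definition pairmap_rev_code x0 c a :=
  code_tail (code_tail (iter c pairmap_step (code_cons c (code_cons x0 a)))).

Lemma size_le_code s : size s <= CodeSeq.code s.
Proof. by elim: s => //= x s IH; rewrite (leq_trans _ (ltn_code_consr x _)). Qed.

Lemma iter_pairmap_step s j x0 a : size s <= j ->
  iter j pairmap_step (code_cons (CodeSeq.code s) (code_cons x0 (CodeSeq.code a))) =
  code_cons 0 (code_cons (last x0 s) (CodeSeq.code (catrev (pairmap f x0 s) a))).
Proof.
elim: s j x0 a => [|x s IH] j x0 a /=.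
  by move=> _; elim: j => //= j ->; rewrite /pairmap_step code_headK.
case: j => // j; rewrite ltnS iterSr => Hj.
suff -> : pairmap_step (code_cons (CodeSeq.code (x :: s)) (code_cons x0 (CodeSeq.code a))) =
  code_cons (CodeSeq.code s) (code_cons x (CodeSeq.code (f x0 x :: a))) by exact: IH.
rewrite /pairmap_step !(code_headK, code_tailK) code_consE ?code_headK ?code_tailK.
by rewrite (negbTE (lt0n_neq0 (code_cons_gt0 _ _))).
Qed.

Lemma pairmap_rev_codeE x0 s a : pairmap_rev_code x0 (CodeSeq.code s) (CodeSeq.code a) =
  CodeSeq.code (catrev (pairmap f x0 s) a).
Proof. by rewrite /pairmap_rev_code iter_pairmap_step ?size_le_code // !code_tailK. Qed.

Hypothesis f_computable : computable (fun v => f (arg0 v) (arg1 v)).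

Lemma computable_pairmap_rev_code x0 c a : computable x0 -> computable c -> computable a ->
  computable (fun v => pairmap_rev_code (x0 v) (c v) (a v)).
Proof.
move=> Hx Hc Ha; apply/computable_code_tail/computable_code_tail.
apply: computable_iter Hc (computable_code_cons Hc (computable_code_cons Hx Ha)).
set s := computable_proj 0; rewrite /pairmap_step.
apply: computable_if; first exact: computable_eqn (computable_code_head s) (computable_const 0).
  exact: s.
have Hr := computable_code_head s.
apply: computable_code_cons (computable_code_tail Hr) _.
apply: computable_code_cons (computable_code_head Hr) _.
apply: computable_code_cons _ (computable_code_tail (computable_code_tail s)).
exact: computable_comp2 f_computable (computable_code_head (computable_code_tail s))
  (computable_code_head Hr).
Qed.

End PairmapCode.

Definition pairmap_code f x0 c a :=
  pairmap_rev_code (fun _ y => y) 0 (pairmap_rev_code f x0 c 0) a.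

Lemma pairmap_codeE f x0 s a : pairmap_code f x0 (CodeSeq.code s) (CodeSeq.code a) =
  CodeSeq.code (pairmap f x0 s ++ a).
Proof.
have pairmap_id x (l : seq nat) : pairmap (fun _ y => y) x l = l.
  by elim: l x => //= y l IH x; rewrite IH.
rewrite /pairmap_code (pairmap_rev_codeE _ _ _ [::]) pairmap_rev_codeE pairmap_id.
by rewrite !catrevE cats0 revK.
Qed.

Lemma computable_pairmap_code f x0 c a :
  computable (fun v => f (arg0 v) (arg1 v)) ->
  computable x0 -> computable c -> computable a ->
  computable (fun v => pairmap_code f (x0 v) (c v) (a v)).
Proof.
move=> Hf Hx Hc Ha.
apply: (computable_pairmap_rev_code (computable_proj 1) (computable_const 0) _ Ha).
exact: (computable_pairmap_rev_code Hf (a := fun _ => 0) Hx Hc (computable_const 0)).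
Qed.

End Computable.

Section Translation.
Local Open Scope nat_scope.
Local Notation code := CodeSeq.code.
Local Notation arg0 v := (nth 0 v 0).
Local Notation arg1 v := (nth 0 v 1).

(* Constant [2] of [LT F] is [T]; in [Ltau K q] it must become constant [3],
   [tau], since constant [2] is [iota_0(T)].  Out-of-range indices denote [0]
   in both languages. *)
Definition shift_cst i := if i < 2 then i else i.+1.

Fixpoint tr_term (t : term) : term :=
  match t with
  | Var n => Var n | Cst i => Cst (shift_cst i) | Par c => Par c
  | Add a b => Add (tr_term a) (tr_term b) | Mul a b => Mul (tr_term a) (tr_term b)
  end.

Definition tr_system (E : system) : system := map (fun e => (tr_term e.1, tr_term e.2)) E.

Definition tau_comm_eq i : term * term := (Mul (Var i) (Cst 3), Mul (Cst 3) (Var i)).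

Fixpoint tau_comm_eqs m := if m is m'.+1 then tau_comm_eq m' :: tau_comm_eqs m' else [::].

Definition translate m (E : system) := tr_system E ++ tau_comm_eqs m.

Lemma tpars_tr_term t : tpars (tr_term t) = tpars t.
Proof. by elim: t => //= a -> b ->. Qed.

Lemma tparfree_tr_term t : tparfree (tr_term t) = tparfree t.
Proof. by elim: t => //= a -> b ->. Qed.

Fixpoint tvars (t : term) : seq nat :=
  match t with
  | Var n => [:: n]
  | Add a b | Mul a b => tvars a ++ tvars b
  | _ => [::]
  end.

Definition node_code n := code_cons (code_cons n 0) (code_cons 0 0).
Definition leaf_code n := code_cons 0 (code_cons (code_cons n 0) 0).
Definition term_code t := map pickle (GenTree.encode (t2g t)).
Arguments node_code : simpl never.
Arguments leaf_code : simpl never.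

Lemma pickle_inl n : pickle (inl n : nat + nat) = node_code n. Proof. by []. Qed.

Lemma pickle_termE t : pickle t = code (term_code t). Proof. by []. Qed.

Lemma pickle_pairE (e : term * term) :
  pickle e = code_cons (pickle e.1) (code_cons (pickle e.2) 0).
Proof. by []. Qed.

Lemma pickle_systemE (E : system) : pickle E = code (map pickle E). Proof. by []. Qed.

Lemma term_code_Var n : term_code (Var n) = [:: node_code 1; leaf_code n; node_code 0].
Proof. by []. Qed.

Lemma term_code_Cst n : term_code (Cst n) = [:: node_code 2; leaf_code n; node_code 0].
Proof. by []. Qed.

Lemma term_code_Par n : term_code (Par n) = [:: node_code 3; leaf_code n; node_code 0].
Proof. by []. Qed.

(* [simpl] must not reach a concrete code such as [node_code 5 = 3 * 2 ^ 32]: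
   only [GenTree.encode] is unfolded here. *)
Lemma term_code_Add a b :
  term_code (Add a b) = node_code 4 :: term_code a ++ term_code b ++ [:: node_code 0].
Proof.
rewrite /term_code [GenTree.encode _]/= map_cons map_rcons !map_cat cats0 -cats1 catA.
by rewrite !pickle_inl.
Qed.

Lemma term_code_Mul a b :
  term_code (Mul a b) = node_code 5 :: term_code a ++ term_code b ++ [:: node_code 0].
Proof.
rewrite /term_code [GenTree.encode _]/= map_cons map_rcons !map_cat cats0 -cats1 catA.
by rewrite !pickle_inl.
Qed.

Lemma last_term_code t x0 : last x0 (term_code t) = node_code 0.
Proof.
by case: t => *; rewrite ?term_code_Add ?term_code_Mul //= !last_cat.
Qed.

Lemma node_code_inj : injective node_code.
Proof. by move=> n m /(congr1 (code_head \o code_head)); rewrite /= !code_headK. Qed.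

Lemma leaf_code_neq_node n m : leaf_code n != node_code m.
Proof.
apply/eqP => /(congr1 code_head); rewrite /node_code /leaf_code !code_headK => /esym/eqP.
by rewrite (negbTE (lt0n_neq0 (code_cons_gt0 _ _))).
Qed.

Definition leaf_value c := code_head (code_head (code_tail c)).

Lemma leaf_valueK n : leaf_value (leaf_code n) = n.
Proof. by rewrite /leaf_value /leaf_code code_tailK !code_headK. Qed.

(* In [term_code t] the leaf right after the tag [node_code 2] is the index
   of a constant. *)
Definition tr_token prev c :=
  if prev == node_code 2 then leaf_code (shift_cst (leaf_value c)) else c.

Lemma pairmap_tr_token t x0 : x0 != node_code 2 ->
  pairmap tr_token x0 (term_code t) = term_code (tr_term t).
Proof.
have tr_tokenE x0' c : x0' != node_code 2 -> tr_token x0' c = c.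
  by rewrite /tr_token => /negbTE ->.
have node_neq2 k : k != 2 -> node_code k != node_code 2.
  by apply: contra => /eqP /node_code_inj ->.
elim: t x0 => [n|n|n|a IHa b IHb|a IHa b IHb] x0 Hx0.
- by rewrite term_code_Var /= !tr_tokenE ?node_neq2 ?leaf_code_neq_node.
- rewrite term_code_Cst /= tr_tokenE // /tr_token eqxx leaf_valueK.
  by rewrite (negbTE (leaf_code_neq_node _ _)) term_code_Cst.
- by rewrite term_code_Par /= !tr_tokenE ?node_neq2 ?leaf_code_neq_node.
- rewrite !term_code_Add /= tr_tokenE // !pairmap_cat IHa ?node_neq2 //.
  by rewrite last_term_code IHb ?node_neq2 // last_term_code /= tr_tokenE ?node_neq2.
- rewrite !term_code_Mul /= tr_tokenE // !pairmap_cat IHa ?node_neq2 //.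
  by rewrite last_term_code IHb ?node_neq2 // last_term_code /= tr_tokenE ?node_neq2.
Qed.

Definition tr_term_code c := pairmap_code tr_token 0 c 0.

Definition tr_eq_code c :=
  code_cons (tr_term_code (code_head c)) (code_cons (tr_term_code (code_head (code_tail c))) 0).

Lemma tr_eq_codeE (e : term * term) : tr_eq_code (pickle e) = pickle (tr_term e.1, tr_term e.2).
Proof.
have tr_term_codeE t : tr_term_code (pickle t) = pickle (tr_term t).
  rewrite /tr_term_code !pickle_termE (pairmap_codeE _ _ _ [::]) cats0.
  by rewrite pairmap_tr_token // eq_sym (negbTE (lt0n_neq0 (code_cons_gt0 _ _))).
by rewrite pickle_pairE /tr_eq_code code_tailK !code_headK !tr_term_codeE.
Qed.

Definition tau_comm_eqs_code m :=
  prec (fun _ => 0) (fun i r _ => code_cons (pickle (tau_comm_eq i)) r) m 0.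

Lemma tau_comm_eqs_codeE m : tau_comm_eqs_code m = code (map pickle (tau_comm_eqs m)).
Proof.
elim: m => [|m IH]; first by [].
rewrite -[LHS]/(code_cons (pickle (tau_comm_eq m)) (tau_comm_eqs_code m)) IH.
have -> : tau_comm_eqs m.+1 = tau_comm_eq m :: tau_comm_eqs m by [].
rewrite map_cons; exact: esym (code_consE _ (map pickle (tau_comm_eqs m))).
Qed.

Definition translate_code e m := pairmap_code (fun _ => tr_eq_code) 0 e (tau_comm_eqs_code m).

Lemma translate_codeE E m : translate_code (pickle E) m = pickle (translate m E).
Proof.
rewrite /translate_code tau_comm_eqs_codeE !pickle_systemE pairmap_codeE.
rewrite /translate /tr_system map_cat; congr (code (_ ++ _)).
by elim: E 0 => //= e E IH x0; rewrite tr_eq_codeE IH.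
Qed.

Definition translate_pair_code c :=
  translate_code (code_head (code_tail c)) (code_head c + code_head (code_tail c)).

Lemma translate_pair_codeE k E :
  translate_pair_code (pickle (k, E)) = pickle (translate (k + pickle E) E).
Proof.
have -> : pickle (k, E) = code_cons k (code_cons (pickle E) 0) by [].
by rewrite /translate_pair_code code_tailK !code_headK translate_codeE.
Qed.

Lemma mem_code x s : x \in s -> x < code s.
Proof. by move=> xs; have /allP := CodeSeq.ltn_code s; apply. Qed.

Lemma ltn_tvars_pickle t m : m \in tvars t -> m < pickle t.
Proof.
have leaf_mem : m \in tvars t -> leaf_code m \in term_code t.
  elim: t => [n|n|n|a IHa b IHb|a IHa b IHb] //=.
  - by rewrite inE => /eqP ->; rewrite term_code_Var !inE eqxx orbT.
  - by rewrite term_code_Add mem_cat inE !mem_cat => /orP[/IHa|/IHb] ->; rewrite ?orbT.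
  - by rewrite term_code_Mul mem_cat inE !mem_cat => /orP[/IHa|/IHb] ->; rewrite ?orbT.
have lt_leaf : m < leaf_code m.
  apply: ltn_trans (ltn_code_consl m 0) _; apply: ltn_trans (ltn_code_consl _ 0) _.
  exact: ltn_code_consr.
by move=> /leaf_mem /mem_code; rewrite -pickle_termE; apply: ltn_trans.
Qed.

Lemma ltn_tvars_pickle_system (E : system) e m :
  e \in E -> m \in tvars e.1 ++ tvars e.2 -> m < pickle E.
Proof.
move=> eE Hm; rewrite pickle_systemE (ltn_trans _ (mem_code (map_f pickle eE))) //.
rewrite pickle_pairE; move: Hm; rewrite mem_cat => /orP[] /ltn_tvars_pickle /ltn_trans->//.
  exact: ltn_code_consl.
exact: ltn_trans (ltn_code_consl _ _) (ltn_code_consr _ _).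
Qed.

Lemma computable_code (gs : seq (seq nat -> nat)) : List.Forall computable gs ->
  computable (fun v => code (map (fun g => g v) gs)).
Proof.
elim=> [|g gs' Hg _ IH]; first exact: computable_const 0.
exact: computable_code_cons Hg IH.
Qed.

Lemma computable_leaf_code x : computable x -> computable (fun v => leaf_code (x v)).
Proof.
move=> Hx; apply: computable_code_cons (computable_const 0) _.
apply: computable_code_cons (computable_const 0).
exact: computable_code_cons Hx (computable_const 0).
Qed.

Lemma computable_tr_term_code x : computable x -> computable (fun v => tr_term_code (x v)).
Proof.
move=> Hx; apply: computable_pairmap_code (computable_const 0) Hx (computable_const 0).
have Hval : computable (fun v => leaf_value (arg1 v)).
  exact/computable_code_head/computable_code_head/computable_code_tail/computable_proj.
apply: computable_if (computable_proj 1).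
  exact: computable_eqn (computable_proj 0) (computable_const _).
apply: computable_leaf_code; rewrite /shift_cst.
exact: computable_if (computable_ltn Hval (computable_const 2)) Hval (computable_succ Hval).
Qed.

Lemma pickle_tau_comm_eq i : pickle (tau_comm_eq i) =
  code_cons (code [:: node_code 5; node_code 1; leaf_code i; node_code 0;
                      node_code 2; leaf_code 3; node_code 0; node_code 0])
  (code_cons (code [:: node_code 5; node_code 2; leaf_code 3; node_code 0;
                       node_code 1; leaf_code i; node_code 0; node_code 0]) 0).
Proof. by rewrite pickle_pairE !pickle_termE !term_code_Mul term_code_Var term_code_Cst. Qed.

Lemma computable_pickle_tau_comm_eq x : computable x ->
  computable (fun v => pickle (tau_comm_eq (x v))).
Proof.
move=> Hx; have Hi := computable_leaf_code Hx.
pose tokens (sw : bool) :=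
  let a := [:: fun _ => node_code 1; fun v => leaf_code (x v); fun _ => node_code 0] in
  let b := [:: fun _ => node_code 2; fun _ => leaf_code 3; fun _ => node_code 0] in
  (fun _ => node_code 5) :: (if sw then b ++ a else a ++ b) ++ [:: fun _ => node_code 0].
have Htokens sw : List.Forall computable (tokens sw).
  by case: sw; do 8 (apply: List.Forall_cons; first by [exact: computable_const | exact: Hi]).
apply: computable_ext (computable_code_cons (computable_code (Htokens false))
  (computable_code_cons (computable_code (Htokens true)) (computable_const 0))) _.
by move=> v; rewrite pickle_tau_comm_eq.
Qed.

Lemma computable_translate_code e m : computable e -> computable m ->
  computable (fun v => translate_code (e v) (m v)).
Proof.
move=> He Hm; apply: computable_pairmap_code He _.
- rewrite /tr_eq_code; apply: computable_code_cons.
    exact/computable_tr_term_code/computable_code_head/computable_proj.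
  apply: computable_code_cons (computable_const 0).
  exact/computable_tr_term_code/computable_code_head/computable_code_tail/computable_proj.
- exact: computable_const.
apply: computable_prec Hm (computable_const 0); first exact: computable_const.
exact: computable_code_cons (computable_pickle_tau_comm_eq (computable_proj 0))
  (computable_proj 1).
Qed.

Lemma computable_translate_pair_code : computable (fun v => translate_pair_code (arg0 v)).
Proof.
have Hp := computable_proj 0; apply: computable_translate_code.
  exact/computable_code_head/computable_code_tail.
apply: computable_add; first exact: computable_code_head.
exact/computable_code_head/computable_code_tail.
Qed.

End Translation.

Local Open Scope ring_scope.

Section TwistedLaurentSeries.
Variable R : nzRingType.
Implicit Types f g : tls R.

Lemma tls_ext f g : tcoef f =1 tcoef g -> f = g.
Proof.
case: f g => [cf bf] [cg bg] /= /functional_extensionality E; subst cg.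
by rewrite (proof_irrelevance _ bf bg).
Qed.

Lemma tcoef_lt_tlb f i : i < tlb f -> tcoef f i = 0.
Proof. by rewrite /tlb; case: constructive_indefinite_description => N HN /=; exact: HN. Qed.

Lemma tcoef_tmk (c : int -> R) N i : tcoef (tmk c N) i = if i < N then 0 else c i.
Proof. by []. Qed.

Lemma tcoefD f g i : tcoef (tadd f g) i = tcoef f i + tcoef g i.
Proof.
rewrite tcoef_tmk; case: ifP => // H.
by move: H; rewrite lt_min => /andP[/tcoef_lt_tlb -> /tcoef_lt_tlb ->]; rewrite addr0.
Qed.

Lemma tcoefN f i : tcoef (topp f) i = - tcoef f i.
Proof. by rewrite tcoef_tmk; case: ifP => // /tcoef_lt_tlb ->; rewrite oppr0. Qed.

Lemma tcoef0 i : tcoef (@tzero R) i = 0.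
Proof. by rewrite tcoef_tmk; case: ifP. Qed.

Lemma tcoef1 i : tcoef (@tone R) i = if i == 0 then 1 else 0.
Proof. by rewrite tcoef_tmk; case: ifP => // /lt_eqF ->. Qed.

Lemma tcoef_tconst (a : R) i : tcoef (tconst a) i = if i == 0 then a else 0.
Proof. by rewrite tcoef_tmk; case: ifP => // /lt_eqF ->. Qed.

Lemma tcoef_tvar i : tcoef (@tvar R) i = if i == 1 then 1 else 0.
Proof. by rewrite tcoef_tmk; case: ifP => // H; case: eqP => // E; move: H; rewrite E. Qed.

Lemma tconst0 : tconst 0 = @tzero R.
Proof. by apply: tls_ext => i; rewrite tcoef_tconst tcoef0; case: ifP. Qed.

Lemma sum_window_widen (h : int -> R) (L L' : int) (N N' : nat) :
  L' <= L -> L + N%:Z <= L' + N'%:Z -> (forall i, i < L \/ L + N%:Z <= i -> h i = 0) ->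
  \sum_(k < N') h (L' + k%:Z) = \sum_(k < N) h (L + k%:Z).
Proof.
move=> le_L le_LN h0.
pose d := absz (L - L'); pose e := absz (L' + N'%:Z - (L + N%:Z))%R.
have -> : N' = (d + (N + e))%N by rewrite /d /e; lia.
rewrite big_split_ord /= big1 ?add0r; last first.
  by move=> k _; apply: h0; left; have := ltn_ord k; rewrite /d; lia.
rewrite big_split_ord /= [X in _ + X]big1 ?addr0; last first.
  by move=> k _; apply: h0; right; rewrite /d; lia.
by apply: eq_bigr => k _; congr h; rewrite /d; lia.
Qed.

Lemma eq_sum_windows (h : int -> R) (L1 L2 : int) (N1 N2 : nat) :
  (forall i, i < L1 \/ L1 + N1%:Z <= i -> h i = 0) ->
  (forall i, i < L2 \/ L2 + N2%:Z <= i -> h i = 0) ->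
  \sum_(k < N1) h (L1 + k%:Z) = \sum_(k < N2) h (L2 + k%:Z).
Proof.
move=> h1 h2; pose L := Num.min L1 L2; pose N := absz (Num.max (L1 + N1%:Z) (L2 + N2%:Z) - L)%R.
rewrite -(@sum_window_widen h L1 L N1 N) -?(@sum_window_widen h L2 L N2 N) //.
all: by rewrite /N /L; lia.
Qed.

Variables sigma sigmai : R -> R.
Hypothesis sigma0 : sigma 0 = 0.
Hypothesis sigmai0 : sigmai 0 = 0.

Lemma spow0 i : spow sigma sigmai i 0 = 0.
Proof. by case: i => m /=; elim: m => /= [|m ->]. Qed.

Definition tmul_term f g (n i : int) := tcoef f i * spow sigma sigmai i (tcoef g (n - i)).

Lemma tmul_term_eq0 f g n i : i < tlb f \/ n - i < tlb g -> tmul_term f g n i = 0.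
Proof.
by case=> /tcoef_lt_tlb H; rewrite /tmul_term H ?mul0r // spow0 mulr0.
Qed.

Lemma tcoef_tmul f g n L N :
  (forall i, i < L \/ L + N%:Z <= i -> tmul_term f g n i = 0) ->
  tcoef (tmul sigma sigmai f g) n = \sum_(k < N) tmul_term f g n (L + k%:Z).
Proof.
move=> hL; rewrite tcoef_tmk; case: ifP => n_small.
  rewrite big1 // => k _; apply: tmul_term_eq0.
  by case: (ltP (L + k%:Z) (tlb f)); [left | right; lia].
rewrite (@eq_sum_windows _ L (tlb f) N (absz (n - tlb f - tlb g)%R).+1) //.
  by apply: eq_bigr => k _; rewrite /tmul_term; congr (_ * spow _ _ _ (tcoef g _)); lia.
by move=> i [H|H]; apply: tmul_term_eq0; [left | right; lia].
Qed.

End TwistedLaurentSeries.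

Section Frobenius.
Variables (K : fieldType) (p n : nat).
Hypothesis pcharKp : p \in [pchar K].
Local Notation q := (p ^ n)%N.

Lemma q_gt0 : (0 < q)%N.
Proof. by rewrite expn_gt0 prime_gt0 ?(pcharf_prime pcharKp). Qed.

Lemma frob0 : frob q (0 : K) = 0.
Proof. by rewrite /frob expr0n eqn0Ngt q_gt0. Qed.

Lemma frob_inj : injective (frob q : K -> K).
Proof.
move=> x y; rewrite /frob => /eqP; rewrite -subr_eq0 => /eqP E; apply/eqP.
have q_pchar : [pchar K].-nat q by rewrite pnatX (pnatE _ (pcharf_prime pcharKp)) pcharKp.
have : (x - y) ^+ q == 0 by rewrite exprDn_pchar // exprNn_pchar // E.
by rewrite expf_eq0 subr_eq0 => /andP[].
Qed.

Hypothesis frob_surj : forall x : K, exists y : K, y ^+ q = x.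

Lemma qrootK : cancel (qroot q) (frob q : K -> K).
Proof.
move=> y; rewrite /frob /qroot; have [z Hz] := frob_surj y.
exact: (epsilon_spec (inhabits y) (fun w => w ^+ q = y) (ex_intro _ z Hz)).
Qed.

Lemma qroot_fixed (c : K) : c ^+ q = c -> qroot q c = c.
Proof. by move=> Hc; apply: frob_inj; rewrite qrootK. Qed.

Lemma qroot0 : qroot q (0 : K) = 0.
Proof. by apply: qroot_fixed; rewrite expr0n eqn0Ngt q_gt0. Qed.

Lemma spow_fixed i (c : K) : c ^+ q = c -> spow (frob q) (qroot q) i c = c.
Proof.
by move=> Hc; case: i => m /=; elim: m => /= [|m ->]; rewrite /frob ?Hc ?qroot_fixed.
Qed.

End Frobenius.

Section CarlitzExtension.
Variables (K : fieldType) (p n : nat) (F : finFieldType) (iota : {rmorphism F -> K}).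
Hypothesis pcharKp : p \in [pchar K].
Hypothesis frob_surj : forall x : K, exists y : K, y ^+ (p ^ n) = x.
Hypothesis cardF : #|F| = (p ^ n)%N.
Local Notation q := (p ^ n)%N.
Local Notation phi := (phi iota).
Local Notation tmulK := (tmul (frob q) (qroot q)).

Lemma iota_fixed (a : F) : iota a ^+ q = iota a.
Proof. by rewrite -rmorphXn -cardF expf_card. Qed.

Lemma tcoef_phi f i : tcoef (phi f) i = iota (tcoef f i).
Proof. by rewrite tcoef_tmk; case: ifP => // /tcoef_lt_tlb ->; rewrite rmorph0. Qed.

Lemma phi_inj : injective phi.
Proof.
move=> f g E; apply: tls_ext => i.
by apply: (fmorph_inj iota); rewrite -!tcoef_phi E.
Qed.

Lemma phiD f g : phi (tadd f g) = tadd (phi f) (phi g).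
Proof. by apply: tls_ext => i; rewrite !(tcoef_phi, tcoefD) rmorphD. Qed.

Lemma phiN f : phi (topp f) = topp (phi f).
Proof. by apply: tls_ext => i; rewrite !(tcoef_phi, tcoefN) rmorphN. Qed.

Lemma phi0 : phi (@tzero F) = @tzero K.
Proof. by apply: tls_ext => i; rewrite !(tcoef_phi, tcoef0) rmorph0. Qed.

Lemma phi1 : phi (@tone F) = @tone K.
Proof.
by apply: tls_ext => i; rewrite !(tcoef_phi, tcoef1); case: ifP; rewrite ?rmorph0 ?rmorph1.
Qed.

Lemma phi_tvar : phi (@tvar F) = @tvar K.
Proof.
by apply: tls_ext => i; rewrite !(tcoef_phi, tcoef_tvar); case: ifP; rewrite ?rmorph0 ?rmorph1.
Qed.

(* The coefficients of [phi f] are fixed by [x |-> x ^+ q], so the twist is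
   invisible on them. *)
Lemma phiM f g : phi (tmul id id f g) = tmulK (phi f) (phi g).
Proof.
have frob0 := frob0 n pcharKp; have qroot0 := qroot0 pcharKp frob_surj.
apply: tls_ext => m; rewrite tcoef_phi.
have spow_id i (x : F) : spow id id i x = x by case: i => k /=; elim: k => /= [|k ->].
have termE i : tmul_term (frob q) (qroot q) (phi f) (phi g) m i =
    iota (tmul_term id id f g m i).
  by rewrite /tmul_term !tcoef_phi spow_fixed ?iota_fixed // spow_id rmorphM.
have supp i : i < tlb f \/ m - i < tlb g -> tmul_term id id f g m i = 0.
  exact: tmul_term_eq0.
pose N := (absz (m - tlb f - tlb g)%R).+1.
have window i : i < tlb f \/ tlb f + N%:Z <= i -> tmul_term id id f g m i = 0.
  by case=> H; apply: supp; [left | right; lia].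
rewrite (tcoef_tmul erefl erefl window) (tcoef_tmul frob0 qroot0 (L := tlb f) (N := N)).
  by rewrite rmorph_sum; apply: eq_bigr => k _; rewrite termE.
by move=> i /window H; rewrite termE H rmorph0.
Qed.

Lemma tcoef_mul_tvar x m : tcoef (tmulK x (@tvar K)) m = tcoef x (m - 1).
Proof.
have frob0 := frob0 n pcharKp; have qroot0 := qroot0 pcharKp frob_surj.
rewrite (@tcoef_tmul _ _ _ frob0 qroot0 x (@tvar K) m (m - 1) 1); last first.
  move=> i Hi; rewrite /tmul_term tcoef_tvar ifF ?spow0 ?mulr0 //.
  by apply/eqP; lia.
rewrite big_ord1 /tmul_term addr0 tcoef_tvar ifT; last by apply/eqP; lia.
by rewrite spow_fixed ?expr1n ?mulr1.
Qed.

Lemma tcoef_tvar_mul x m : tcoef (tmulK (@tvar K) x) m = tcoef x (m - 1) ^+ q.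
Proof.
have frob0 := frob0 n pcharKp; have qroot0 := qroot0 pcharKp frob_surj.
rewrite (@tcoef_tmul _ _ _ frob0 qroot0 (@tvar K) x m 1 1); last first.
  move=> i Hi; rewrite /tmul_term tcoef_tvar ifF ?mul0r //.
  by apply/eqP; lia.
by rewrite big_ord1 /tmul_term addr0 tcoef_tvar eqxx mul1r.
Qed.

Lemma commute_tvarP x :
  tmulK x (@tvar K) = tmulK (@tvar K) x <-> forall j, tcoef x j ^+ q = tcoef x j.
Proof.
split=> [E j|H].
  have := congr1 (fun y => tcoef y (j + 1)) E.
  by rewrite tcoef_mul_tvar tcoef_tvar_mul addrK.
by apply: tls_ext => m; rewrite tcoef_mul_tvar tcoef_tvar_mul H.
Qed.

Lemma phi_commute_tvar f : tmulK (phi f) (@tvar K) = tmulK (@tvar K) (phi f).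
Proof. by apply/commute_tvarP => j; rewrite tcoef_phi iota_fixed. Qed.

Hypothesis n_gt0 : (0 < n)%N.

(* [iota] already provides [q] distinct roots of ['X^q - 'X]. *)
Lemma fixed_in_image (c : K) : c ^+ q = c -> exists a, iota a = c.
Proof.
move=> Hc; case: (pickP (fun a => iota a == c)) => [a /eqP Ha|Hnot]; first by exists a.
have q_gt1 : (1 < q)%N by rewrite -(expn0 p) ltn_exp2l ?prime_gt1 ?(pcharf_prime pcharKp).
pose P : {poly K} := 'X^q - 'X.
have sizeP : size P = q.+1.
  by rewrite /P size_polyDl ?size_polyXn // size_polyN size_polyX ltnS.
have P_neq0 : P != 0 by rewrite -size_poly_eq0 sizeP.
have rts : all (root P) (c :: map iota (enum F)).
  apply/allP => y; rewrite inE => /orP[/eqP ->|/mapP[a _ ->]];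
  by rewrite /root /P !hornerE ?Hc ?iota_fixed subrr.
have U : uniq (c :: map iota (enum F)).
  rewrite /= (map_inj_uniq (fmorph_inj iota)) ?enum_uniq andbT.
  by apply/mapP => -[a _ E]; move: (Hnot a); rewrite E eqxx.
by have := max_poly_roots P_neq0 rts U; rewrite sizeP /= size_map -cardE cardF ltnn.
Qed.

Lemma commute_tvar_in_image x :
  tmulK x (@tvar K) = tmulK (@tvar K) x -> exists f, x = phi f.
Proof.
move/commute_tvarP => Hx.
pose pre (c : K) : F := odflt 0 [pick a | iota a == c].
have preK c : c ^+ q = c -> iota (pre c) = c.
  move=> Hc; rewrite /pre; case: pickP => [a /eqP //|H] /=.
  by have [a Ha] := fixed_in_image Hc; move: (H a); rewrite Ha eqxx.
have bdd : exists N, forall i, i < N -> pre (tcoef x i) = 0.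
  exists (tlb x) => i /tcoef_lt_tlb x0; apply: (fmorph_inj iota).
  by rewrite rmorph0 preK x0 // expr0n eqn0Ngt (q_gt0 n pcharKp).
by exists (TLS bdd); apply: tls_ext => i; rewrite tcoef_phi /= preK.
Qed.

End CarlitzExtension.

Lemma sat_cat (M : lstruct) par env (E1 E2 : system) :
  @sat M par env (E1 ++ E2) <-> @sat M par env E1 /\ @sat M par env E2.
Proof. exact: List.Forall_app. Qed.

Lemma sat_cons (M : lstruct) par env (e : term * term) (E : system) :
  @sat M par env (e :: E) <-> @teval M par env e.1 = @teval M par env e.2 /\ @sat M par env E.
Proof. by split=> [H|[]]; [inversion H | constructor]. Qed.

Lemma defines_ext (M : lstruct) k (E : system) (S S' : k.-tuple (car M) -> Prop) :
  defines E S -> (forall z, S z <-> S' z) -> defines E S'.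
Proof. by case=> parE HS HSS'; split=> // z; rewrite -HSS'. Qed.

Section Transfer.
Variables (K : fieldType) (p n : nat) (F : finFieldType) (iota : {rmorphism F -> K}).
Hypothesis pcharKp : p \in [pchar K].
Hypothesis frob_surj : forall x : K, exists y : K, y ^+ (p ^ n) = x.
Hypothesis cardF : #|F| = (p ^ n)%N.
Hypothesis n_gt0 : (0 < n)%N.
Local Notation q := (p ^ n)%N.
Local Notation LF := (LT F).
Local Notation LK := (Ltau K q).
Local Notation phi := (phi iota).
Local Notation tmulK := (tmul (frob q) (qroot q)).

Lemma teval_tr_term (par : nat -> tls F) (par' : nat -> tls K) env env' t :
  (forall c, par' c = phi (par c)) -> {in tvars t, forall m, env' m = phi (env m)} ->
  @teval LK par' env' (tr_term t) = phi (@teval LF par env t).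
Proof.
move=> Hpar; elim: t => [m|i|c|a IHa b IHb|a IHa b IHb] /= Henv.
- by apply: Henv; rewrite inE.
- by case: i => [|[|[|i]]]; rewrite /= ?nth_nil ?phi0 ?phi1 ?phi_tvar.
- exact: Hpar.
- by rewrite phiD IHa ?IHb // => m Hm; apply: Henv; rewrite mem_cat Hm ?orbT.
- by rewrite (phiM iota pcharKp frob_surj cardF) IHa ?IHb // => m Hm;
    apply: Henv; rewrite mem_cat Hm ?orbT.
Qed.

Lemma sat_tr_system (par : nat -> tls F) (par' : nat -> tls K) env env' (E : system) :
  (forall c, par' c = phi (par c)) ->
  (forall m, (m < pickle E)%N -> env' m = phi (env m)) ->
  @sat LK par' env' (tr_system E) <-> @sat LF par env E.
Proof.
move=> Hpar Henv.
have {Henv} : forall e m, e \in E -> m \in tvars e.1 ++ tvars e.2 -> env' m = phi (env m).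
  by move=> e m eE Hm; apply/Henv/(ltn_tvars_pickle_system eE Hm).
elim: E => [|e E IH] Henv; first by split=> _; constructor.
rewrite /tr_system map_cons !sat_cons -/(tr_system E) IH; last first.
  by move=> e' m eE; apply: Henv; rewrite inE eE orbT.
have Henv_e i : {in tvars (if i then e.1 else e.2), forall m, env' m = phi (env m)}.
  by move=> m Hm; apply: (Henv e); rewrite ?mem_head // mem_cat; case: i Hm => ->; rewrite ?orbT.
rewrite /= (teval_tr_term Hpar (Henv_e true)) (teval_tr_term Hpar (Henv_e false)).
by split=> -[E12 HE]; split=> //; [exact: phi_inj E12 | rewrite E12].
Qed.

Lemma sat_tau_comm_eqs (par' : nat -> tls K) env' m :
  @sat LK par' env' (tau_comm_eqs m) <->
  (forall i, (i < m)%N -> tmulK (env' i) (@tvar K) = tmulK (@tvar K) (env' i)).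
Proof.
elim: m => [|m IH] /=; first by split=> // _; constructor.
rewrite sat_cons IH /=; split.
  by case=> E1 H i; rewrite ltnS leq_eqVlt => /orP[/eqP ->|/H].
by move=> H; split; [apply: H | move=> i Hi; apply: H; rewrite ltnS ltnW].
Qed.

Lemma sat_tau_comm_eqs_phi (par' : nat -> tls K) env m :
  @sat LK par' (fun j => phi (env j)) (tau_comm_eqs m).
Proof. by apply/sat_tau_comm_eqs => i _; apply: phi_commute_tvar. Qed.

Definition phi_inv (w : tls K) : tls F := epsilon (inhabits (@tzero F)) (fun f => w = phi f).

Lemma phi_invK w : tmulK w (@tvar K) = tmulK (@tvar K) w -> phi (phi_inv w) = w.
Proof.
move/(commute_tvar_in_image iota pcharKp frob_surj cardF n_gt0) => Hw.
exact/esym/(epsilon_spec (inhabits (@tzero F)) (fun f => w = phi f) Hw).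
Qed.

Lemma envk_phi k (x : k.-tuple (tls F)) (y : nat -> tls F) m :
  @envk LK k (map_tuple phi x) (fun j => phi (y j)) m = phi (@envk LF k x y m).
Proof. by rewrite /envk; case: ifP => // mk; rewrite (nth_map (@tzero F)) ?size_tuple ?phi0. Qed.

Lemma parfree_translate m (E : system) : parfree E -> parfree (translate m E).
Proof.
move=> parE; apply/List.Forall_app; split; last by elim: m => [|m IH]; constructor.
by elim: parE => [|e E' He _ IH]; constructor; rewrite //= !tparfree_tr_term.
Qed.

(* The bound [k + pickle E] covers the free variables [0..k-1] as well as
   all the variables of [E]. *)
Lemma defines_translate k (E : system) (S : k.-tuple (tls F) -> Prop) :
  @defines LF k E S -> @defines LK k (translate (k + pickle E) E) (@timage LF LK phi k S).
Proof.
case=> parE HS; split; first exact: parfree_translate.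
have sat_tr env env' := @sat_tr_system (fun _ => @tzero F) (fun _ => @tzero K) env env' E
  (fun _ => esym (phi0 iota)).
move=> z; split.
  case=> x [Sx ->]; have [y Hy] := (HS x).1 Sx.
  exists (fun m => phi (y m)); apply/sat_cat; split.
    exact/(sat_tr _ _ (fun m _ => envk_phi x y m)).
  by apply/sat_tau_comm_eqs => i _; rewrite envk_phi; apply: phi_commute_tvar.
case=> y' /sat_cat [Htr /sat_tau_comm_eqs Hcomm].
set env' := @envk LK k z y'.
have env'K m : (m < k + pickle E)%N -> phi (phi_inv (env' m)) = env' m.
  by move=> Hm; apply/phi_invK/Hcomm.
pose x := map_tuple phi_inv z; pose y m := phi_inv (y' m).
have envkE m : @envk LF k x y m = phi_inv (env' m).
  by rewrite /env' /envk; case: ifP => // mk; rewrite (nth_map (@tzero K)) ?size_tuple.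
exists x; split.
  have Henv m : (m < pickle E)%N -> env' m = phi (@envk LF k x y m).
    by move=> Hm; rewrite envkE env'K // (leq_trans Hm) ?leq_addl.
  by apply/(HS x).2; exists y; apply/(sat_tr _ _ Henv).
apply: eq_from_tnth => i; rewrite !tnth_map.
have := env'K i (leq_trans (ltn_ord i) (leq_addr _ _)).
by rewrite /env' /envk ltn_ord (tnth_nth (@tzero K)) => ->.
Qed.

Lemma effective_dioph_map_phi : @effective_dioph_map LF LK phi.
Proof.
split=> [k S [E HE]|]; first by exists (translate (k + pickle E) E); exact: defines_translate.
exists translate_pair_code; split; first exact/computable1P/computable_translate_pair_code.
move=> k E S HE; exists (translate (k + pickle E) E).
by rewrite translate_pair_codeE pickleK; split=> //; exact: defines_translate.
Qed.

Definition phi_recpres (R : recpres LF) : recpres LK :=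
  @RecPres LK (rdom R) (fun c => phi (rval R c)) (rzero R) (rone R)
    (radd R) (rmul R) (ropp R) (req R).

Lemma recursive_subring_phi R : recursive_subring R -> recursive_subring (phi_recpres R).
Proof.
case=> Hc [[z0 z1] [[o0 o1] [Hadd [Hmul [Hopp Heq]]]]]; split=> //=.
split; first by rewrite z1 phi0.
split; first by rewrite o1 phi1.
split; first by move=> a b da db; have [? ->] := Hadd a b da db; rewrite phiD.
split.
  move=> a b da db; have [? ->] := Hmul a b da db.
  by rewrite (phiM iota pcharKp frob_surj cardF).
split; first by move=> a da; have [? ->] := Hopp a da; rewrite phiN.
by move=> a b da db; rewrite Heq //; split=> [->|/phi_inj].
Qed.

Lemma HTP_witness_phi R : HTP_witness R -> HTP_witness (phi_recpres R).
Proof.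
case=> Rrec Rconst Rsing; have [_ [[z0 z1] [[o0 o1] _]]] := Rrec.
split; first exact: recursive_subring_phi.
  case=> [|[|[|[|i]]]] // _.
  - by exists (rzero R); rewrite /= z1 phi0.
  - by exists (rone R); rewrite /= o1 phi1.
  - by exists (rzero R); rewrite /= z1 phi0 tconst0.
  - have [a [da Ha]] := Rconst 2 isT; exists a; split=> //=.
    by move: Ha => /= ->; exact: phi_tvar.
move=> a da; have [E HE] := Rsing a da; exists (translate (1 + pickle E) E).
apply: defines_ext (defines_translate HE) _ => z; split.
  by case=> x' [-> ->]; apply: val_inj.
by move=> ->; exists [tuple rval R a]; split=> //; apply: val_inj.
Qed.

Lemma params_in_translate R (E : system) m :
  params_in R E -> params_in (phi_recpres R) (translate m E).
Proof.
move=> HE; apply/List.Forall_app; split; last by elim: m => [|m IH]; constructor.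
by elim: HE => [|e E' He _ IH]; constructor; rewrite //= !tpars_tr_term.
Qed.

Lemma solvable_translate R (E : system) :
  solvable R E <-> solvable (phi_recpres R) (translate (pickle E) E).
Proof.
split=> [[env HE]|[env' /sat_cat [Htr /sat_tau_comm_eqs Hcomm]]].
  exists (fun j => phi (env j)); apply/sat_cat; split; last exact: sat_tau_comm_eqs_phi.
  exact/(sat_tr_system (par := rval R) (par' := rval (phi_recpres R)) (fun _ => erefl)).
have Henv m : (m < pickle E)%N -> env' m = phi (phi_inv (env' m)).
  by move=> Hm; rewrite phi_invK //; apply: Hcomm.
exists (fun j => phi_inv (env' j)).
exact/(sat_tr_system (par := rval R) (par' := rval (phi_recpres R)) (fun _ => erefl) Henv).
Qed.

Lemma HTP_negative_phi : HTP_negative LF -> HTP_negative LK.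
Proof.
case=> R [HR Rundec]; exists (phi_recpres R); split; first exact: HTP_witness_phi.
move=> D D_computable.
have DG_computable : computable1 (fun c => D (translate_code c c)).
  apply/computable1P/(computable_comp1 (computable1_computable D_computable)).
  exact: computable_translate_code (computable_proj 0) (computable_proj 0).
have [E [HE Hwrong]] := Rundec _ DG_computable.
exists (translate (pickle E) E); split; first exact: params_in_translate.
by rewrite -solvable_translate -translate_codeE.
Qed.

End Transfer.

Theorem mainTheorem7 (K : fieldType) (p n : nat) (F : finFieldType)
    (iota : {rmorphism F -> K}) :
  prime p -> p \in [pchar K] -> (0 < n)%N -> #|F| = (p ^ n)%N ->
  (forall x : K, exists y : K, y ^+ (p ^ n) = x) ->
  @effective_dioph_map (LT F) (Ltau K (p ^ n)) (phi iota) /\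
  (HTP_negative (LT F) -> HTP_negative (Ltau K (p ^ n))).
Proof.
(* [prime p] is implied by [p \in [pchar K]]. *)
move=> _ pcharKp n_gt0 cardF frob_surj.
split; first exact: effective_dioph_map_phi.
exact: HTP_negative_phi.
Qed.
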